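(* Let $m \ge 1$ and $n_c \ge 5$ be integers, let $\mathcal G_m^{n_c}=(\mathcal V,\mathcal E)$ be the 1D honeycomb network defined in the context, and let $c>0$. Consider the Kuramoto model $$\dot\theta_i=\omega_i+\sum_{j=1}^n a_{ij}\sin(\theta_j-\theta_i),\qquad i\in\mathcal V,$$ with $a_{ij}=a_{ji}=c$ for every edge $(i,j)\in\mathcal E$, $a_{ij}=0$ otherwise, and identical natural frequencies $\omega_i=\omega_j$ for all $i,j\in\mathcal V$. Consider the phase configurations $\theta=(\theta_1,\dots,\theta_n)\in(\mathbb R/2\pi\mathbb Z)^n$ satisfying: (C1) for every edge $(i,j)\in\mathcal E$ there is $k\in\mathbb Z$ with $|k|\le \lceil n_c/4\rceil-1$ and $\theta_i-\theta_j\equiv \frac{2\pi k}{n_c}\pmod{2\pi}$; and (C2) for every $p\in\{0,\dots,m-1\}$ and all $i,j\in\{p(n_c-1)+1,\dots,(p+1)(n_c-1)\}$, $\theta_i-\theta_{i+1}\equiv\theta_j-\theta_{j+1}\pmod{2\pi}$. Then, modulo a common rotation of all phases, there are exactly $(2\lceil n_c/4\rceil-1)^m$ configurations satisfying (C1) and (C2); each of them is a phase-locked configuration of the model, and each is locally exponentially stable (modulo the one-dimensional rotational symmetry, i.e. the Jacobian at the configuration has a simple zero eigenvalue in the direction $(1,\dots,1)$ and all other eigenvalues negative).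
   Context: The 1D honeycomb network $\mathcal G_m^{n_c}$ with $m$ cycles of $n_c$ nodes each is the undirected graph with vertex set $\mathcal V=\{1,2,\dots,m(n_c-1)+1\}$ (so $n=m(n_c-1)+1$) and edge set $\mathcal E=\mathcal E_1\cup\mathcal E_2$, where $\mathcal E_1=\{(i,i+1): 1\le i\le m(n_c-1)\}$ and $\mathcal E_2=\{(i,i+n_c-1): i=p(n_c-1)+1,\ p=0,1,\dots,m-1\}$. Thus for each $p$ the nodes $p(n_c-1)+1,\dots,(p+1)(n_c-1)+1$ form a cycle of length $n_c$, and consecutive cycles share exactly one node and no edge. A phase-locked configuration is a solution in which all phase velocities $\dot\theta_i$ are equal for all times; equivalently, in the frame rotating at the common natural frequency, it is an equilibrium of the dynamics. $\lceil\cdot\rceil$ denotes the ceiling function. *)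

From HB Require Import structures.
From mathcomp Require Import all_boot all_order all_algebra.
From mathcomp Require Import reals trigo.
Unset Printing Implicit Defensive.
Import Order.TTheory GRing.Theory Num.Theory.
Local Open Scope ring_scope.

(* Vertices of G_m^{nc} are 'I_(m*(nc-1)).+1, i.e. the paper's vertex i
   (1-based) is the ordinal i-1.  *)

(* number of vertices minus one: n = hcN nc m + 1 = m(nc-1)+1 *)
Definition hcN (nc m : nat) : nat := (m * (nc - 1))%N.

(* Directed edge list (i,j) of the paper, 0-based:
   E1 : (k, k+1) for k < m(nc-1);
   E2 : (p(nc-1), p(nc-1)+nc-1) for p < m. *)
Definition hc_edge (nc m i j : nat) : bool :=
  ((j == i.+1) && (i < m * (nc - 1)))%N
  || [&& j == i + (nc - 1), i %% (nc - 1) == 0 & i < m * (nc - 1)]%N.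

Definition hc_adj (nc m i j : nat) : bool := hc_edge nc m i j || hc_edge nc m j i.

Definition ceil4 (nc : nat) : nat := ((nc + 3) %/ 4)%N.

Section Kuramoto.
Context {R : realType}.

Definition eqmod2pi (x y : R) : Prop := exists k : int, x - y = (2 * pi) * k%:~R.

Definition rot_equiv {N : nat} (th th' : 'I_N -> R) : Prop :=
  exists r : R, forall i, eqmod2pi (th i) (th' i + r).

Definition coupling (nc m : nat) (c : R) (i j : 'I_((hcN nc m).+1)) : R :=
  if hc_adj nc m i j then c else 0.

Definition kuramoto_rhs (nc m : nat) (c : R) (w th : 'I_((hcN nc m).+1) -> R)
  (i : 'I_((hcN nc m).+1)) : R :=
  w i + \sum_j coupling nc m c i j * sin (th j - th i).

Definition phase_locked (nc m : nat) (c : R) (w th : 'I_((hcN nc m).+1) -> R) : Prop :=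
  exists Om : R, forall i, kuramoto_rhs nc m c w th i = Om.

Definition kuramoto_jac (nc m : nat) (c : R) (th : 'I_((hcN nc m).+1) -> R)
  : 'M[R]_((hcN nc m).+1) :=
  \matrix_(i, j) if i == j then - \sum_k coupling nc m c i k * cos (th k - th i)
                 else coupling nc m c i j * cos (th j - th i).

Definition stable_mod_rot (nc m : nat) (c : R) (th : 'I_((hcN nc m).+1) -> R) : Prop :=
  let J := kuramoto_jac nc m c th in
  [/\ (const_mx 1 : 'rV[R]_((hcN nc m).+1)) *m J = 0,
      mup 0 (char_poly J) = 1%N
    & forall a : R, eigenvalue J a -> a != 0 -> a < 0].

Definition C1 (nc m : nat) (th : 'I_((hcN nc m).+1) -> R) : Prop :=
  forall i j : 'I_((hcN nc m).+1), hc_edge nc m i j ->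
    exists k : int, (absz k <= ceil4 nc - 1)%N /\
      eqmod2pi (th i - th j) (2 * pi * k%:~R / nc%:R).

Definition C2 (nc m : nat) (th : 'I_((hcN nc m).+1) -> R) : Prop :=
  forall p i j : nat, (p < m)%N ->
    (p * (nc - 1) <= i < p.+1 * (nc - 1))%N ->
    (p * (nc - 1) <= j < p.+1 * (nc - 1))%N ->
    eqmod2pi (th (inord i) - th (inord i.+1)) (th (inord j) - th (inord j.+1)).

End Kuramoto.

(* Condition (C2) forces the phases to advance by a constant step
   delta_p = 2 pi k_p / n_c along the path of each cycle p, and (C1) on the
   chord closing the cycle then holds with lag -k_p because n_c delta_p = 0
   mod 2 pi.  Up to rotation, the configurations are thus the "twisted states"
   given by integers k_p with |k_p| <= ceil(n_c/4) - 1, and distinct choices stay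
   distinct mod 2 pi since |k_p - k'_p| < n_c.  In a twisted state every node
   sees, in each cycle through it, one neighbour at offset +delta_p and one at
   -delta_p; their sine couplings cancel, so it is an equilibrium.  As
   4 |k_p| < n_c, every edge has cos (theta_j - theta_i) > 0, so the Jacobian is
   the Laplacian of a connected graph with positive weights: its columns sum to
   zero, a maximum principle makes its other eigenvalues negative, and it is
   singular only along the constants, which makes 0 a simple root of its
   characteristic polynomial. *)

From HB Require Import structures.
From mathcomp Require Import all_boot all_order all_algebra.
From mathcomp Require Import reals trigo.
From mathcomp Require Import zify ring lra.
Import Order.TTheory GRing.Theory Num.Theory.
Local Open Scope ring_scope.

Set Implicit Arguments.
Unset Strict Implicit.

Lemma ord_path_ind n (P : pred 'I_n.+1) :
  (forall k, (k < n)%N -> P (inord k) = P (inord k.+1)) ->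
  forall i j, P i -> P j.
Proof.
move=> step.
have toP0 (i : 'I_n.+1) : P i = P ord0.
  rewrite -(inord_val i); have : (i <= n)%N by rewrite -ltnS.
  elim: (nat_of_ord i) => [_|k IHk lt_kn]; last by rewrite -step // IHk // ltnW.
  by congr P; apply: val_inj; rewrite /= inordK.
by move=> i j; rewrite toP0 (toP0 j).
Qed.

Lemma char_poly_conj (R : comNzRingType) n (P Q A : 'M[R]_n) :
  P *m Q = 1%:M -> char_poly (P *m A *m Q) = char_poly A.
Proof.
move=> PQ1; rewrite /char_poly /char_poly_mx.
have -> : 'X%:M - map_mx polyC (P *m A *m Q)
    = map_mx polyC P *m ('X%:M - map_mx polyC A) *m map_mx polyC Q.
  rewrite mulmxBr mulmxBl !map_mxM; congr (_ - _).
  by rewrite scalar_mxC -mulmxA -map_mxM PQ1 map_mx1 mulmx1.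
rewrite !det_mulmx mulrC mulrA -det_mulmx -map_mxM (mulmx1C PQ1) map_mx1 det1.
by rewrite mul1r.
Qed.

Lemma char_poly_row0_eq0 (R : comNzRingType) n (A : 'M[R]_n.+1) :
  (forall j, A ord0 j = 0) -> char_poly A = 'X * char_poly (row' ord0 (col' ord0 A)).
Proof.
move=> A0; rewrite /char_poly (expand_det_row _ ord0) big_ord_recl big1 ?addr0.
  by rewrite /cofactor row'_col'_char_poly_mx !mxE A0 subr0 expr0 mul1r.
by move=> j _; rewrite !mxE A0 subr0 mulr0n mul0r.
Qed.

Lemma mup0_mulX (F : fieldType) (p : {poly F}) : ~~ root p 0 -> mup 0 ('X * p) = 1%N.
Proof.
by move=> p0; rewrite mupMl // -[X in mup _ X]subr0 -[X in mup _ X]expr1 mup_XsubCX eqxx.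
Qed.

Definition row0_ones_mx (R : nzRingType) n : 'M[R]_n.+1 :=
  \matrix_(i, j) if i == ord0 then 1 else (i == j)%:R.

Lemma row0_ones_mx_unit (R : comUnitRingType) n : row0_ones_mx R n \in unitmx.
Proof.
have trig_PT : is_trig_mx (row0_ones_mx R n)^T.
  apply/is_trig_mxP => i j lt_ij; rewrite !mxE.
  have [j0|_] := eqVneq j ord0; first by rewrite j0 in lt_ij.
  by rewrite -val_eqE /= gtn_eqF.
rewrite unitmxE -det_tr det_trig // big1 ?unitr1 // => i _.
by rewrite !mxE eqxx if_same.
Qed.

Lemma row0_ones_mulmx_ord0 (R : nzRingType) n (z : 'cV[R]_n.+1) :
  (row0_ones_mx R n *m z) ord0 0 = \sum_k z k 0.
Proof. by rewrite mxE; apply: eq_bigr => k _; rewrite mxE mul1r. Qed.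

Section WeightedLaplacian.
Variables (R : realFieldType) (n : nat) (W : 'I_n.+1 -> 'I_n.+1 -> R).
Hypothesis W_diag : forall i, W i i = 0.
Hypothesis W_sym : forall i j, W i j = W j i.
Hypothesis W_ge0 : forall i j, 0 <= W i j.
Hypothesis W_path : forall k, (k < n)%N -> 0 < W (inord k) (inord k.+1).

Definition laplacian : 'M[R]_n.+1 :=
  \matrix_(i, j) if i == j then - \sum_k W i k else W i j.

Lemma mul_laplacian_col (x : 'cV[R]_n.+1) i :
  (laplacian *m x) i 0 = \sum_j W i j * (x j 0 - x i 0).
Proof.
rewrite mxE (bigD1 i) //= mxE eqxx [RHS](bigD1 i) //= W_diag mul0r add0r.
under [in RHS]eq_bigr do rewrite mulrBr.
rewrite sumrB -mulr_suml (bigD1 i) //= W_diag add0r mulNr addrC.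
by congr (_ - _); apply: eq_bigr => j ji; rewrite mxE eq_sym (negbTE ji).
Qed.

Lemma trmx_laplacian : laplacian^T = laplacian.
Proof. by apply/matrixP => i j; rewrite !mxE eq_sym; case: eqP => [->|]. Qed.

Lemma mul_row_laplacian (v : 'rV[R]_n.+1) j :
  (v *m laplacian) 0 j = \sum_i W j i * (v 0 i - v 0 j).
Proof.
transitivity ((v *m laplacian)^T j 0); first by rewrite [RHS]mxE.
rewrite trmx_mul trmx_laplacian mul_laplacian_col.
by apply: eq_bigr => i _; rewrite !mxE.
Qed.

Lemma const_mx_laplacian : (const_mx 1 : 'rV[R]_n.+1) *m laplacian = 0.
Proof.
apply/rowP => j; rewrite mul_row_laplacian [RHS]mxE big1 // => i _.
by rewrite !mxE subrr mulr0.
Qed.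

Lemma laplacian_ker_const (x : 'cV[R]_n.+1) :
  laplacian *m x = 0 -> forall i j, x i 0 = x j 0.
Proof.
move=> Lx0; have [i0 _ x_max] := @arg_maxP _ _ _ ord0 xpredT (fun j => x j 0) isT.
pose M i := x i 0 == x i0 0.
(* at a maximiser the nonnegative terms of [(L x) i = 0] must all vanish *)
have max_nbr i j : M i -> 0 < W i j -> M j.
  rewrite /M => /eqP xi; apply: contraTT => xj; rewrite -leNgt.
  have := mul_laplacian_col x i; rewrite Lx0 mxE => /esym/eqP.
  rewrite -oppr_eq0 -sumrN psumr_eq0 => [/allP/(_ j (mem_index_enum j))|k _].
    by rewrite oppr_eq0 mulf_eq0 subr_eq0 xi (negbTE xj) orbF => /eqP ->.
  by rewrite oppr_ge0 mulr_ge0_le0 // subr_le0 xi; apply: x_max.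
have {}max_nbr i j : 0 < W i j -> M i = M j.
  by move=> Wij; apply/idP/idP => /max_nbr; apply; rewrite // W_sym.
have M_all j : M j.
  have step k : (k < n)%N -> M (inord k) = M (inord k.+1).
    by move=> lt_kn; apply: max_nbr; apply: W_path.
  exact: (@ord_path_ind _ M step i0 j (eqxx _)).
by move=> i j; rewrite (eqP (M_all i)) (eqP (M_all j)).
Qed.

Lemma laplacian_eigenvalue_le0 a : eigenvalue laplacian a -> a <= 0.
Proof.
case/eigenvalueP => v vL nz_v.
have [i0 _ v_max] := @arg_maxP _ _ _ ord0 xpredT (fun j => `|v 0 j|) isT.
have {nz_v} v_i0 : v 0 i0 != 0.
  apply: contraNneq nz_v => vi0; apply/eqP/rowP => j; rewrite mxE.
  by apply/eqP; rewrite -normr_le0 (le_trans (v_max j isT)) // vi0 normr0.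
pose u := (v 0 i0)^-1 *: v.
have uL : u *m laplacian = a *: u by rewrite -scalemxAl vL scalerA mulrC -scalerA.
have u_i0 : u 0 i0 = 1 by rewrite mxE mulVf.
have u_le1 j : u 0 j <= 1.
  rewrite (le_trans (ler_norm _)) // mxE normrM normfV mulrC.
  by rewrite ler_pdivrMr ?normr_gt0 // mul1r; apply: v_max.
have := mul_row_laplacian u i0; rewrite uL mxE u_i0 mulr1 => ->.
by apply: sumr_le0 => j _; rewrite mulr_ge0_le0 // subr_le0 u_le1.
Qed.

Local Notation P := (row0_ones_mx R n).
Local Notation K := (P *m laplacian *m invmx P).

Lemma laplacian_conj_row0 j : K ord0 j = 0.
Proof.
have : row ord0 K = 0.
  rewrite !row_mul (_ : row ord0 P = const_mx 1) ?const_mx_laplacian ?mul0mx //.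
  by apply/rowP => k; rewrite !mxE.
by move/rowP/(_ j); rewrite !mxE.
Qed.

(* A kernel vector of the minor, padded with a 0, is a kernel vector of [K],
   so it comes from a constant kernel vector of the Laplacian whose sum is 0. *)
Lemma laplacian_conj_minor_det : \det (row' ord0 (col' ord0 K)) != 0.
Proof.
rewrite -det_tr; apply/det0P => -[v nz_v vK'].
pose y : 'cV[R]_n.+1 := \col_i (if unlift ord0 i is Some i' then v 0 i' else 0).
have y0 : y ord0 0 = 0 by rewrite mxE unlift_none.
have y_lift j : y (lift ord0 j) 0 = v 0 j by rewrite mxE liftK.
have Ky : K *m y = 0.
  apply/colP => i; rewrite [RHS]mxE mxE.
  case: (unliftP ord0 i) => [i'|] ->; last first.
    by rewrite big1 // => j _; rewrite laplacian_conj_row0 mul0r.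
  rewrite big_ord_recl y0 mulr0 add0r.
  transitivity ((v *m (row' ord0 (col' ord0 K))^T) 0 i'); last by rewrite vK' mxE.
  by rewrite mxE; apply: eq_bigr => j _; rewrite y_lift !mxE mulrC.
pose z := invmx P *m y.
have z_const : forall i j, z i 0 = z j 0.
  apply: laplacian_ker_const.
  have -> : laplacian *m z = invmx P *m (K *m y).
    by rewrite !mulmxA mulVmx ?row0_ones_mx_unit ?mul1mx.
  by rewrite Ky mulmx0.
have y_Pz : y = P *m z by rewrite /z mulmxA mulmxV ?row0_ones_mx_unit // mul1mx.
have z0 : z ord0 0 = 0.
  have : y ord0 0 = (n.+1)%:R * z ord0 0.
    transitivity (\sum_(k < n.+1) z ord0 0); last by rewrite sumr_const card_ord mulr_natl.
    by rewrite y_Pz row0_ones_mulmx_ord0; apply: eq_bigr => k _; rewrite (z_const k ord0).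
  by rewrite y0 => /esym/eqP; rewrite mulf_eq0 pnatr_eq0 => /eqP.
move/eqP: nz_v; apply; apply/rowP => j; rewrite -y_lift y_Pz mxE big1 ?mxE // => k _.
by rewrite (z_const k ord0) z0 mulr0.
Qed.

Lemma laplacian_mup0 : mup 0 (char_poly laplacian) = 1%N.
Proof.
rewrite -(char_poly_conj laplacian (mulmxV (row0_ones_mx_unit R n))).
rewrite (char_poly_row0_eq0 laplacian_conj_row0) mup0_mulX // /root horner_coef0.
by rewrite char_poly_det mulf_eq0 signr_eq0 laplacian_conj_minor_det.
Qed.

End WeightedLaplacian.

Section Mod2pi.
Variable R : realType.
Implicit Types x y z t : R.

Lemma eqmod2pi_refl x : eqmod2pi x x.
Proof. by exists 0; rewrite subrr mulr0. Qed.

Lemma eqmod2pi_trans y x z : eqmod2pi x y -> eqmod2pi y z -> eqmod2pi x z.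
Proof. by case=> k h [l h']; exists (k + l); rewrite intrD mulrDr -h -h' addrA subrK. Qed.

Lemma eqmod2piD x y z t : eqmod2pi x y -> eqmod2pi z t -> eqmod2pi (x + z) (y + t).
Proof. by case=> k h [l h']; exists (k + l); rewrite intrD mulrDr -h -h' opprD addrACA. Qed.

Lemma eqmod2piN x y : eqmod2pi x y -> eqmod2pi (- x) (- y).
Proof. by case=> k h; exists (- k); rewrite mulrNz mulrN -h opprB opprK addrC. Qed.

Lemma eqmod2piB x y z t : eqmod2pi x y -> eqmod2pi z t -> eqmod2pi (x - z) (y - t).
Proof. by move=> xy zt; apply: eqmod2piD xy (eqmod2piN zt). Qed.

Lemma eqmod2pi_periodic (f : R -> R) : periodic f (pi *+ 2) ->
  forall x y, eqmod2pi x y -> f x = f y.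
Proof.
move=> f_per x y [[] n /eqP]; rewrite subr_eq => /eqP ->.
  by rewrite addrC -[_%:~R]/(n%:R) mulr_natr mulr_natl periodicn.
rewrite addrC NegzE mulrNz mulrN -[_%:~R]/(n.+1%:R) mulr_natr mulr_natl.
by rewrite -[in RHS](subrK ((pi *+ 2) *+ n.+1) y) periodicn.
Qed.

Lemma eqmod2pi_sin x y : eqmod2pi x y -> sin x = sin y.
Proof. exact/eqmod2pi_periodic/sinD2pi. Qed.

Lemma eqmod2pi_cos x y : eqmod2pi x y -> cos x = cos y.
Proof. exact/eqmod2pi_periodic/cosD2pi. Qed.

Lemma cos_2pi_frac_gt0 (k : int) (n : nat) :
  (4 * absz k < n)%N -> 0 < cos (2 * pi * k%:~R / n%:R : R).
Proof.
move=> lt_4k_n; have n_gt0 : (0 : R) < n%:R by rewrite ltr0n; lia.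
have k4_lt_n : `|k%:~R : R| * 4 < n%:R.
  by rewrite -intr_norm -[`|k|]/((absz k)%:Z) -natrM ltr_nat mulnC.
have : `|k%:~R * 4 / n%:R| < 1 :> R.
  rewrite normrM normfV (gtr0_norm n_gt0) ltr_pdivrMr // mul1r.
  by rewrite normrM normr_nat.
rewrite ltr_norml => /andP [lo hi].
apply: cos_gt0_pihalf; have -> : 2 * pi * k%:~R / n%:R = pi / 2 * (k%:~R * 4 / n%:R) :> R.
  by field; rewrite gt_eqF.
have pi2_gt0 : 0 < pi / 2 :> R by rewrite divr_gt0 ?pi_gt0.
apply/andP; split; nra.
Qed.

Lemma eqmod2pi_2pi_frac_inj (a b : int) (n : nat) :
  (absz (a - b) < n)%N ->
  eqmod2pi (2 * pi * a%:~R / n%:R : R) (2 * pi * b%:~R / n%:R) -> a = b.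
Proof.
move=> lt_ab_n [l h]; have n_neq0 : n%:R != 0 :> R by rewrite pnatr_eq0; lia.
have c_neq0 : 2 * pi / n%:R != 0 :> R by rewrite !mulf_neq0 ?invr_eq0 // gt_eqF ?pi_gt0.
have : (a - b)%:~R = (l * n%:Z)%:~R :> R.
  apply: (mulfI c_neq0); rewrite intrB intrM -[(n%:Z)%:~R]/(n%:R : R).
  transitivity (2 * pi * a%:~R / n%:R - 2 * pi * b%:~R / n%:R : R); first by field.
  by rewrite h; field.
move/eqP; rewrite eqr_int => /eqP ab.
have /eqP : absz l = 0%N by move: lt_ab_n; rewrite ab abszM absz_nat; nia.
by rewrite absz_eq0 => /eqP l0; apply/eqP; rewrite -subr_eq0 ab l0 mul0r.
Qed.

End Mod2pi.

Lemma if_orb_add (R : nmodType) (a b : bool) (x : R) : ~~ (a && b) ->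
  (if a || b then x else 0) = (if a then x else 0) + (if b then x else 0).
Proof. by case: a; case: b; rewrite ?addr0 ?add0r. Qed.

Lemma sum_ord_if_eq (R : nmodType) n (t : nat) (b : bool) (F : nat -> R) :
  (b -> t < n)%N ->
  \sum_(j < n) (if (j == t :> nat) && b then F j else 0) = if b then F t else 0.
Proof.
case: b => [/(_ isT) lt_tn|_]; last by rewrite big1 // => j _; rewrite andbF.
rewrite (bigD1 (Ordinal lt_tn)) //= eqxx big1 ?addr0 // => j.
by rewrite -val_eqE /= andbT => /negbTE ->.
Qed.

Section HoneycombGraph.
Variables nc m : nat.
Hypothesis nc_gt2 : (2 < nc)%N.
Local Notation d := (nc - 1)%N.
Local Notation N := (hcN nc m).

Lemma hc_edge_lt i j : hc_edge nc m i j -> (i < j)%N.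
Proof. by case/orP => [/andP [/eqP ->]|/and3P [/eqP ->]] //; lia. Qed.

Lemma hc_adj_irr i : hc_adj nc m i i = false.
Proof. by apply/norP; split; apply/negP => /hc_edge_lt; rewrite ltnn. Qed.

Lemma hc_edge_succ u : (u < N)%N -> hc_edge nc m u u.+1.
Proof. by move=> lt_uN; rewrite /hc_edge eqxx lt_uN. Qed.

Lemma hc_edge_in i j : (i <= N)%N ->
  hc_edge nc m j i = (((j == i.-1) && (0 < i)) || ((j == i - d) && ((d %| i) && (0 < i))))%N.
Proof.
move=> le_iN; rewrite /hc_edge; congr orb.
  apply/andP/andP => -[/eqP -> lt]; first by rewrite eqxx.
  by rewrite prednK // eqxx -ltnS prednK.
apply/and3P/andP => [[/eqP -> dj lt_jN]|[/eqP -> /andP [di i_gt0]]].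
  by rewrite /dvdn modnDr dj addnK eqxx; split => //; lia.
have le_di : (d <= i)%N by apply: dvdn_leq.
have lt_idN : (i - d < N)%N by lia.
by rewrite subnK // eqxx -(modnDr _ d) subnK // lt_idN.
Qed.

Lemma sum_coupling (R : realType) (c : R) (F : nat -> R) (i : 'I_N.+1) :
  \sum_j coupling nc m c i j * F j =
  c * ((if (i < N)%N then F i.+1 else 0)
     + (if ((d %| i) && (i < N))%N then F (i + d)%N else 0)
     + (if (0 < i)%N then F i.-1 else 0)
     + (if ((d %| i) && (0 < i))%N then F (i - d)%N else 0)).
Proof.
have le_iN : (i <= N)%N by rewrite -ltnS.
have split_adj (j : 'I_N.+1) : coupling nc m c i j * F j =
    c * ((if hc_edge nc m i j then F j else 0) + (if hc_edge nc m j i then F j else 0)).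
  rewrite /coupling /hc_adj -if_orb_add; last first.
    by apply/negP => /andP [/hc_edge_lt ? /hc_edge_lt ?]; lia.
  by case: ifP; rewrite ?mul0r ?mulr0.
have out_edge (j : nat) : (if hc_edge nc m i j then F j else 0) =
    (if ((j == i.+1) && (i < N))%N then F j else 0)
    + (if ((j == i + d) && ((d %| i) && (i < N)))%N then F j else 0).
  rewrite /hc_edge if_orb_add //.
  by apply/negP => /andP [/andP [/eqP -> _] /andP [/eqP ? _]]; lia.
have in_edge (j : nat) : (if hc_edge nc m j i then F j else 0) =
    (if ((j == i.-1) && (0 < i))%N then F j else 0)
    + (if ((j == i - d) && ((d %| i) && (0 < i)))%N then F j else 0).
  rewrite hc_edge_in // if_orb_add //.
  by apply/negP => /andP [/andP [/eqP -> ?] /andP [/eqP ? /andP [/dvdn_leq ? _]]]; lia.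
under eq_bigr do rewrite split_adj out_edge in_edge.
rewrite -mulr_sumr !big_split /= !sum_ord_if_eq ?addrA // => [||/andP []]; try lia.
move=> /dvdnP [q ->]; rewrite ltn_mul2r => /andP [_ lt_qm].
by rewrite ltnS -mulSnr leq_mul2r lt_qm orbT.
Qed.
End HoneycombGraph.

Lemma divn_block d p u : (p * d <= u < p * d + d)%N -> (u %/ d)%N = p.
Proof. by move=> /andP [lo hi]; rewrite -(subnKC lo) divnMDl ?divn_small; lia. Qed.

Section Twisted.
Variables (R : realType) (nc m : nat) (k : nat -> int).
Hypothesis nc_gt2 : (2 < nc)%N.
Local Notation d := (nc - 1)%N.
Local Notation N := (hcN nc m).

Definition lag p : R := 2 * pi * (k p)%:~R / nc%:R.

Definition twisted (v : nat) : R := - \sum_(0 <= u < v) lag (u %/ d).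

Lemma twisted_succ u : twisted u.+1 = twisted u - lag (u %/ d).
Proof. by rewrite /twisted big_nat_recr //= opprD. Qed.

Lemma twisted_cycle p : eqmod2pi (twisted (p * d + d)) (twisted (p * d) + lag p).
Proof.
have cycle_sum : twisted (p * d + d) = twisted (p * d) - d%:R * lag p.
  rewrite /twisted (big_cat_nat _ (leq_addr _ _)) //= opprD; congr (_ - _).
  rewrite (eq_big_nat _ _ (F2 := fun _ => lag p)) => [|u /divn_block -> //].
  by rewrite sumr_const_nat addKn mulr_natl.
(* [nc * lag p] is a multiple of [2 pi] *)
exists (- k p); rewrite cycle_sum /lag natrB; last by lia.
by rewrite intrN; field; rewrite pnatr_eq0; lia.
Qed.

Lemma sin_twisted_chord p : sin (twisted (p * d + d) - twisted (p * d)) = sin (lag p).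
Proof.
apply: eqmod2pi_sin; have := eqmod2piB (twisted_cycle p) (eqmod2pi_refl (twisted (p * d))).
by rewrite addrAC subrr add0r.
Qed.

Lemma C1_twisted : (forall p, absz (k p) <= ceil4 nc - 1)%N ->
  C1 nc m (fun i : 'I_N.+1 => twisted i).
Proof.
move=> k_bound i j /orP [/andP [/eqP -> _]|/and3P [/eqP -> di _]].
  exists (k (i %/ d)); split => //.
  by rewrite twisted_succ opprB addrC subrK; apply: eqmod2pi_refl.
exists (- k (i %/ d)); split; first by rewrite abszN.
have -> : nat_of_ord i = (i %/ d * d)%N by rewrite divnK.
have := eqmod2piB (eqmod2pi_refl (twisted (i %/ d * d))) (twisted_cycle (i %/ d)).
by rewrite opprD addNKr /lag intrN mulrN mulNr mulnK //; lia.
Qed.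

Lemma C2_twisted : C2 nc m (fun i : 'I_N.+1 => twisted i).
Proof.
move=> p i j lt_pm lt_i lt_j.
have le_pdN : (p.+1 * d <= N)%N by rewrite /hcN leq_mul2r lt_pm orbT.
rewrite !inordK ?twisted_succ ?subKr; try lia.
rewrite !(@divn_block d p) -?mulSnr //; apply: eqmod2pi_refl.
Qed.

Lemma sum_coupling_twisted (c : R) (i : 'I_N.+1) :
  \sum_j coupling nc m c i j * sin (twisted j - twisted i) = 0.
Proof.
rewrite (sum_coupling nc_gt2 c (fun j => sin (twisted j - twisted i))).
apply/eqP; rewrite mulf_eq0; apply/orP; right; apply/eqP.
move: (nat_of_ord i) (ltn_ord i) => {}i lt_iN1.
have d_gt0 : (0 < d)%N by lia.
have next : sin (twisted i.+1 - twisted i) = - sin (lag (i %/ d)).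
  by rewrite twisted_succ addrAC subrr add0r sinN.
have prev : (0 < i)%N -> sin (twisted i.-1 - twisted i) = sin (lag (i.-1 %/ d)).
  by move=> i_gt0; rewrite -[in twisted i](prednK i_gt0) twisted_succ opprB addrC subrK.
have chord_next : (d %| i)%N -> sin (twisted (i + d) - twisted i) = sin (lag (i %/ d)).
  by move=> di; rewrite -{1 2}(divnK di) sin_twisted_chord.
have chord_prev : (d %| i)%N -> (0 < i)%N ->
    sin (twisted (i - d) - twisted i) = - sin (lag (i.-1 %/ d)).
  move=> /dvdnP [[|q] ->] // _; rewrite mulSnr addnK.
  have -> : ((q * d + d).-1 %/ d)%N = q by apply: divn_block; lia.
  by rewrite -sin_twisted_chord -sinN opprB.
have [di|ndi] := boolP (d %| i)%N; rewrite /= ?andFb ?addr0.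
  rewrite next chord_next //; case: (i < N)%N; rewrite ?addNr ?add0r;
  by case: posnP => [_|i_gt0]; rewrite ?addr0 // prev // chord_prev // subrr.
have i_gt0 : (0 < i)%N by case: posnP ndi => // ->; rewrite dvdn0.
have lt_iN : (i < N)%N.
  by rewrite ltn_neqAle -ltnS lt_iN1 andbT; apply: contraNneq ndi => ->; rewrite dvdn_mull.
rewrite lt_iN i_gt0 next prev // (_ : i.-1 %/ d = i %/ d)%N; first by rewrite addrC subrr.
apply: divn_block; move: ndi (ltn_pmod i d_gt0) (divn_eq i d).
rewrite /dvdn; move: (i %/ d)%N (i %% d)%N => q r; lia.
Qed.

End Twisted.

Lemma rot_equivB (R : realType) n (th th' : 'I_n -> R) i j :
  rot_equiv th th' -> eqmod2pi (th i - th j) (th' i - th' j).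
Proof.
case=> r rot; have := eqmod2piB (rot i) (rot j).
by rewrite opprD addrACA subrr addr0.
Qed.

Section Rotation.
Variables (R : realType) (nc m : nat).
Hypothesis nc_gt2 : (2 < nc)%N.
Local Notation d := (nc - 1)%N.
Local Notation N := (hcN nc m).

Lemma sum_coupling_rot (c : R) (th th' : 'I_N.+1 -> R) i : rot_equiv th th' ->
  \sum_j coupling nc m c i j * sin (th j - th i) =
  \sum_j coupling nc m c i j * sin (th' j - th' i).
Proof.
by move=> rot; apply: eq_bigr => j _; rewrite (eqmod2pi_sin (rot_equivB j i rot)).
Qed.

Lemma rot_equiv_twisted (k : nat -> int) (th : 'I_N.+1 -> R) : C2 nc m th ->
  (forall p, p < m ->
     eqmod2pi (th (inord (p * d)) - th (inord (p * d).+1)) (lag R nc k p))%N ->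
  rot_equiv th (fun i : 'I_N.+1 => twisted R nc k i).
Proof.
move=> C2th first_lag; exists (th ord0).
suff th_twisted v : (v <= N)%N -> eqmod2pi (th (inord v)) (twisted R nc k v + th ord0).
  by move=> i; rewrite -[th i](congr1 th (inord_val i)); apply: th_twisted; rewrite -ltnS.
elim: v => [_|v IHv lt_vN].
  have -> : inord 0 = ord0 :> 'I_N.+1 by apply: val_inj; rewrite /= inordK.
  by rewrite /twisted big_nil oppr0 add0r; apply: eqmod2pi_refl.
have d_gt0 : (0 < d)%N by lia.
pose p := (v %/ d)%N.
have lt_pm : (p < m)%N by rewrite ltn_divLR // mulnC; exact: leq_trans lt_vN _.
have v_cycle : (p * d <= v < p.+1 * d)%N by rewrite leq_divM ltn_ceil.
have pd_cycle : (p * d <= p * d < p.+1 * d)%N by rewrite leqnn mulSn; lia.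
have := eqmod2piB (IHv (ltnW lt_vN))
  (eqmod2pi_trans (C2th p v (p * d)%N lt_pm v_cycle pd_cycle) (first_lag p lt_pm)).
by rewrite twisted_succ opprB addrC subrK addrAC.
Qed.
End Rotation.

Section Count.
Variables (R : realType) (nc m : nat).
Hypothesis nc_gt2 : (2 < nc)%N.
Local Notation d := (nc - 1)%N.
Local Notation N := (hcN nc m).
Local Notation K := (ceil4 nc - 1)%N.
Local Notation b := (2 * ceil4 nc - 1)%N.

(* a choice of lag indices, shifted from [-K, K] to ['I_b] *)
Definition lags_of (f : {ffun 'I_m -> 'I_b}) (p : nat) : int :=
  if insub p is Some q then (f q)%:Z - K%:Z else 0.

Lemma lags_of_bound f p : (absz (lags_of f p) <= K)%N.
Proof.
rewrite /lags_of; case: insubP => [q _ _|_] //=.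
by have := ltn_ord (f q); rewrite /ceil4; lia.
Qed.

Lemma lags_of_val f (q : 'I_m) : lags_of f q = (f q)%:Z - K%:Z.
Proof. by rewrite /lags_of valK. Qed.

Lemma card_lag_choices : #|{ffun 'I_m -> 'I_b}| = (b ^ m)%N.
Proof. by rewrite card_ffun !card_ord. Qed.

Definition hc_rep (s : 'I_(b ^ m)) : 'I_N.+1 -> R :=
  fun i => twisted R nc (lags_of (enum_val (cast_ord (esym card_lag_choices) s))) i.

Lemma hc_rep_C1 s : C1 nc m (hc_rep s).
Proof. exact/C1_twisted/lags_of_bound. Qed.

Lemma hc_rep_C2 s : C2 nc m (hc_rep s).
Proof. exact: C2_twisted. Qed.

Lemma hc_rep_inj s t : rot_equiv (hc_rep s) (hc_rep t) -> s = t.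
Proof.
move=> rot; apply: (@cast_ord_inj _ _ (esym card_lag_choices)); apply: enum_val_inj.
apply/ffunP => q; apply: val_inj.
set f := enum_val _; set g := enum_val _.
have d_gt0 : (0 < d)%N by lia.
have lt_qdN : (q * d < N)%N by rewrite /hcN ltn_mul2r d_gt0 ltn_ord.
have := rot_equivB (inord (q * d)) (inord (q * d).+1) rot.
rewrite /hc_rep !inordK ?twisted_succ ?mulnK // -/f -/g; try lia.
have lt_fg : (absz (lags_of f q - lags_of g q) < nc)%N.
  by have := lags_of_bound f q; have := lags_of_bound g q; rewrite /ceil4; lia.
rewrite !subKr => /(eqmod2pi_2pi_frac_inj lt_fg); rewrite !lags_of_val.
by move/(congr1 (fun x => x + K%:Z)); rewrite !subrK => -[].
Qed.

Lemma hc_rep_surj th : C1 nc m th -> C2 nc m th -> exists s, rot_equiv th (hc_rep s).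
Proof.
move=> C1th C2th; have d_gt0 : (0 < d)%N by lia.
have lag_choice (q : 'I_m) : exists u : 'I_b,
    eqmod2pi (th (inord (q * d)) - th (inord (q * d).+1)) (2 * pi * (u%:Z - K%:Z)%:~R / nc%:R).
  have lt_qdN : (q * d < N)%N by rewrite /hcN ltn_mul2r d_gt0 ltn_ord.
  have [|k [k_bound lag_k]] := C1th (inord (q * d)) (inord (q * d).+1).
    by rewrite !inordK ?hc_edge_succ //; lia.
  have lt_kb : (absz (k + K%:Z)%R < b)%N by rewrite /ceil4 in k_bound *; lia.
  by exists (Ordinal lt_kb); rewrite /= (_ : _ - _ = k) //; lia.
have [g lag_g] := fin_all_exists lag_choice.
exists (cast_ord card_lag_choices (enum_rank [ffun q => g q])).
rewrite /hc_rep cast_ordK enum_rankK; apply: rot_equiv_twisted => // p lt_pm.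
by have := lag_g (Ordinal lt_pm); rewrite /lag (lags_of_val _ (Ordinal lt_pm)) ffunE.
Qed.
End Count.

Section Stability.
Variables (R : realType) (nc m : nat) (c : R) (th : 'I_(hcN nc m).+1 -> R).
Hypotheses (nc_gt2 : (2 < nc)%N) (c_gt0 : 0 < c) (C1th : C1 nc m th).
Implicit Types i j : 'I_(hcN nc m).+1.

Lemma C1_edge_cos_gt0 i j : hc_edge nc m i j -> 0 < cos (th j - th i).
Proof.
case/C1th => k [k_bound lag_k]; rewrite -cosN opprB (eqmod2pi_cos lag_k).
by apply: cos_2pi_frac_gt0; rewrite /ceil4 in k_bound; lia.
Qed.

Lemma C1_stable_mod_rot : stable_mod_rot nc m c th.
Proof.
pose W i j := coupling nc m c i j * cos (th j - th i).
have W_adj i j : hc_adj nc m i j -> 0 < W i j.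
  rewrite /W /coupling => adj; rewrite adj.
  case/orP: adj => /C1_edge_cos_gt0 cos_gt0; first exact: mulr_gt0.
  by rewrite -cosN opprB mulr_gt0.
have W_diag i : W i i = 0 by rewrite /W /coupling hc_adj_irr ?mul0r.
have W_sym i j : W i j = W j i by rewrite /W /coupling /hc_adj orbC -cosN opprB.
have W_ge0 i j : 0 <= W i j.
  by case adj: (hc_adj nc m i j); [exact/ltW/W_adj | rewrite /W /coupling adj mul0r].
have W_path u : (u < hcN nc m)%N -> 0 < W (inord u) (inord u.+1).
  by move=> lt_uN; apply: W_adj; rewrite /hc_adj !inordK ?hc_edge_succ //; lia.
split; [exact: const_mx_laplacian | exact: laplacian_mup0 | ].
move=> a /(laplacian_eigenvalue_le0 W_diag W_sym W_ge0) a_le0 a_neq0.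
by rewrite lt_neqAle a_neq0.
Qed.
End Stability.

Theorem theorem3p1 (R : realType) (m nc : nat) (c : R)
    (w : 'I_((hcN nc m).+1) -> R) :
  (1 <= m)%N -> (5 <= nc)%N -> 0 < c -> (forall i j, w i = w j) ->
  (exists reps : 'I_((2 * ceil4 nc - 1) ^ m) -> ('I_((hcN nc m).+1) -> R),
      (forall s, C1 nc m (reps s) /\ C2 nc m (reps s))
   /\ (forall s t, rot_equiv (reps s) (reps t) -> s = t)
   /\ (forall th, C1 nc m th -> C2 nc m th -> exists s, rot_equiv th (reps s)))
  /\ (forall th : 'I_((hcN nc m).+1) -> R, C1 nc m th -> C2 nc m th ->
        phase_locked nc m c w th /\ stable_mod_rot nc m c th).
Proof.
move=> _ nc_ge5 c_gt0 w_const; have nc_gt2 : (2 < nc)%N by lia.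
split.
  exists (@hc_rep R nc m); split; [|split].
  - by move=> s; split; [exact: hc_rep_C1 | exact: hc_rep_C2].
  - exact: hc_rep_inj.
  - exact: hc_rep_surj.
move=> th C1th C2th; split; last exact: C1_stable_mod_rot.
have [s rot] := hc_rep_surj nc_gt2 C1th C2th.
exists (w ord0) => i.
by rewrite /kuramoto_rhs (sum_coupling_rot _ _ rot) sum_coupling_twisted // addr0.
Qed.
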